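(* Let $V$ be a left vector space over a field $K$ (any dimension) with $\mathcal G\neq\emptyset$, and let $d\ge0$ be an integer. For $X,Y\in\mathcal G$ the following are equivalent: (i) $X$ and $Y$ are at distance $d$ in the Grassmann graph on $\mathcal G$; (ii) $\dim((X+Y)/X)=\dim((X+Y)/Y)=d$; (iii) $\dim(X/(X\cap Y))=\dim(Y/(X\cap Y))=d$.
   Context: Fields are not necessarily commutative (division rings). $\mathcal G$ denotes the set of all subspaces $X\le V$ such that $X$ is isomorphic to $V/X$. Two elements $X,Y\in\mathcal G$ are adjacent if $\dim((X+Y)/X)=\dim((X+Y)/Y)=1$. The Grassmann graph on $\mathcal G$ has vertex set $\mathcal G$ and edges the pairs of adjacent elements; distance means graph distance (infinite if no path exists). *)

From HB Require Import structures.
From mathcomp Require Import all_boot all_order all_algebra.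
Set Implicit Arguments. Unset Strict Implicit. Unset Printing Implicit Defensive.
Import GRing.Theory.
Local Open Scope ring_scope.

(* A division ring ("field", not necessarily commutative): every nonzero
   element is invertible (1 <> 0 is built into unitRingType). *)
Definition division_ring (K : unitRingType) : Prop :=
  forall x : K, x != 0 -> x \is a GRing.unit.

Section Grass.
Variables (K : unitRingType) (V : lmodType K).

Definition subspace (X : V -> Prop) : Prop :=
  [/\ X 0, (forall x y, X x -> X y -> X (x + y)) & (forall (c : K) x, X x -> X (c *: x))].

Definition ssum (X Y : V -> Prop) : V -> Prop :=
  fun v => exists x y, [/\ X x, Y y & v = x + y].

Definition scap (X Y : V -> Prop) : V -> Prop := fun v => X v /\ Y v.

Definition linear_map (f : V -> V) : Prop :=
  (forall u v, f (u + v) = f u + f v) /\ (forall (c : K) v, f (c *: v) = c *: f v).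

(* X is isomorphic to V/X, i.e. (first isomorphism theorem) there is a linear
   map V -> V with kernel X and image X. *)
Definition iso_quot (X : V -> Prop) : Prop :=
  exists f : V -> V, [/\ linear_map f,
    (forall v, f v = 0 <-> X v) & (forall x, X x <-> exists v, f v = x)].

Definition inG (X : V -> Prop) : Prop := subspace X /\ iso_quot X.

(* dim (W/U) = d for subspaces U <= W: there are w_1..w_d in W whose images
   in W/U form a basis of W/U. *)
Definition qdim (W U : V -> Prop) (d : nat) : Prop :=
  exists w : 'I_d -> V,
    [/\ (forall i, W (w i)),
        (forall c : 'I_d -> K, U (\sum_(i < d) c i *: w i) -> forall i, c i = 0)
      & (forall v, W v -> exists c : 'I_d -> K, U (v - \sum_(i < d) c i *: w i))].

Definition adjacent (X Y : V -> Prop) : Prop :=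
  qdim (ssum X Y) X 1 /\ qdim (ssum X Y) Y 1.

Definition walk (X Y : V -> Prop) (n : nat) : Prop :=
  exists p : nat -> (V -> Prop),
    [/\ p 0%N = X, p n = Y, (forall i, (i <= n)%N -> inG (p i))
      & (forall i, (i < n)%N -> adjacent (p i) (p i.+1))].

Definition gdist (X Y : V -> Prop) (d : nat) : Prop :=
  walk X Y d /\ forall n, (n < d)%N -> ~ walk X Y n.

End Grass.

(* Write d(X, Y) = k when dim (X+Y)/X = dim (X+Y)/Y = k; by the second isomorphism
   theorem this is also dim X/(X∩Y) = dim Y/(X∩Y). Comparing dimensions inside
   X + W + Y shows that d changes by at most one along an edge, so the graph distance
   is at least d. Conversely, if d(X, Y) = k + 1, write X = H ⊕ ⟨x⟩ with X∩Y ⊆ H and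
   pick y ∈ Y \ X. A linear form λ vanishing on H + ⟨x + y⟩ with λ x = 1 (Zorn) makes
   v ↦ v + λ(v)(y - x) a linear involution fixing H and swapping x and y. It carries X
   onto Z = H + ⟨y⟩, so Z ≅ V/Z, Z is adjacent to X and d(Z, Y) = k; induction gives a
   path of length k. *)

From HB Require Import structures.
From mathcomp Require Import all_boot all_order all_algebra.
From mathcomp Require Import boolp classical_sets.
Set Implicit Arguments. Unset Strict Implicit. Unset Printing Implicit Defensive.
Import GRing.Theory.
Local Open Scope ring_scope.
Local Open Scope classical_set_scope.

Definition ord_join T a b (f : 'I_a -> T) (g : 'I_b -> T) (k : 'I_(a + b)) : T :=
  match split k with inl i => f i | inr j => g j end.

Lemma ord_join_lshift T a b (f : 'I_a -> T) (g : 'I_b -> T) i :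
  ord_join f g (lshift b i) = f i.
Proof. by rewrite /ord_join (unsplitK (inl i : 'I_a + 'I_b)). Qed.

Lemma ord_join_rshift T a b (f : 'I_a -> T) (g : 'I_b -> T) j :
  ord_join f g (rshift a j) = g j.
Proof. by rewrite /ord_join (unsplitK (inr j : 'I_a + 'I_b)). Qed.

Section Subspaces.
Variables (K : unitRingType) (V : lmodType K).
Implicit Types (U W X Y : V -> Prop) (u v w x y : V).

Section OneSubspace.
Variables (U : V -> Prop) (sU : subspace U).

Lemma subspace0 : U 0. Proof. by case: sU. Qed.

Lemma subspaceD x y : U x -> U y -> U (x + y).
Proof. by case: sU => _ + _; apply. Qed.

Lemma subspaceZ (c : K) x : U x -> U (c *: x).
Proof. by case: sU => _ _; apply. Qed.

Lemma subspaceN x : U x -> U (- x).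
Proof. by rewrite -scaleN1r; apply: subspaceZ. Qed.

Lemma subspaceB x y : U x -> U y -> U (x - y).
Proof. by move=> Ux /subspaceN; apply: subspaceD. Qed.

Lemma subspaceBl x y : U (x - y) -> U y -> U x.
Proof. by move=> Uxy Uy; rewrite -(subrK y x); apply: subspaceD. Qed.

Lemma subspace_sum n (c : 'I_n -> K) (g : 'I_n -> V) :
  (forall i, U (g i)) -> U (\sum_(i < n) c i *: g i).
Proof.
move=> Ug; elim/big_ind: _ => [|x y|i _]; [exact: subspace0 | exact: subspaceD |].
exact: subspaceZ.
Qed.

End OneSubspace.

Lemma subspace_ssum X Y : subspace X -> subspace Y -> subspace (ssum X Y).
Proof.
move=> sX sY; split.
- by exists 0, 0; rewrite addr0; split => //; apply: subspace0.
- move=> _ _ [x [y [Xx Yy ->]]] [x' [y' [Xx' Yy' ->]]]; exists (x + x'), (y + y').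
  by split; [apply: subspaceD | apply: subspaceD | rewrite addrACA].
- move=> c _ [x [y [Xx Yy ->]]]; exists (c *: x), (c *: y).
  by split; [apply: subspaceZ | apply: subspaceZ | rewrite scalerDr].
Qed.

Lemma subspace_scap X Y : subspace X -> subspace Y -> subspace (scap X Y).
Proof.
move=> sX sY; split.
- by split; apply: subspace0.
- by move=> a b [Xa Ya] [Xb Yb]; split; apply: subspaceD.
- by move=> c a [Xa Ya]; split; apply: subspaceZ.
Qed.

Lemma ssumC X Y : ssum X Y = ssum Y X.
Proof.
by apply/seteqP; split=> _ [x [y [Xx Yy ->]]]; exists y, x; split=> //; rewrite addrC.
Qed.

Lemma scapC X Y : scap X Y = scap Y X.
Proof. exact: setIC. Qed.

Lemma ssum_subl X Y : subspace Y -> X `<=` ssum X Y.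
Proof. by move=> sY x Xx; exists x, 0; rewrite addr0; split=> //; apply: subspace0. Qed.

Lemma ssum_subr X Y : subspace X -> Y `<=` ssum X Y.
Proof. by move=> sX y Yy; exists 0, y; rewrite add0r; split=> //; apply: subspace0. Qed.

Lemma ssum_min X Y W : subspace W -> X `<=` W -> Y `<=` W -> ssum X Y `<=` W.
Proof. by move=> sW XW YW _ [x [y [/XW Wx /YW Wy ->]]]; apply: subspaceD. Qed.

Definition line w : V -> Prop := fun v => exists t : K, v = t *: w.

Lemma subspace_line w : subspace (line w).
Proof.
split; first by exists 0; rewrite scale0r.
- by move=> _ _ [s ->] [t ->]; exists (s + t); rewrite scalerDl.
- by move=> c _ [t ->]; exists (c * t); rewrite scalerA.
Qed.

Lemma line_id w : line w w.
Proof. by exists 1; rewrite scale1r. Qed.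

Definition span_mod U n (g : 'I_n -> V) : V -> Prop :=
  fun v => exists c : 'I_n -> K, U (v - \sum_(i < n) c i *: g i).

Lemma subspace_span_mod U n (g : 'I_n -> V) : subspace U -> subspace (span_mod U g).
Proof.
move=> sU; split.
- exists (fun _ => 0); rewrite big1 ?subr0 => [|i _]; [exact: subspace0 | exact: scale0r].
- move=> a b [c Hc] [c' Hc']; exists (fun i => c i + c' i).
  rewrite (eq_bigr (fun i => c i *: g i + c' i *: g i)) => [|i _]; last exact: scalerDl.
  by rewrite big_split /= opprD addrACA; apply: subspaceD.
- move=> k a [c Hc]; exists (fun i => k * c i).
  rewrite (eq_bigr (fun i => k *: (c i *: g i))) => [|i _]; last by rewrite scalerA.
  by rewrite -scaler_sumr -scalerBr; apply: subspaceZ.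
Qed.

Lemma span_mod_sub U n (g : 'I_n -> V) : subspace U -> U `<=` span_mod U g.
Proof. by move=> sU u Uu; exists (fun _ => 0); rewrite big1 ?subr0 // => i _; exact: scale0r. Qed.

Lemma qdim0P W U : qdim W U 0 <-> W `<=` U.
Proof.
split=> [[w [_ _ spanw]] v /spanw [c] | WU]; first by rewrite big_ord0 subr0.
exists (fun _ => 0); split=> [[]|c _ []|v Wv] //.
by exists (fun _ => 0); rewrite big_ord0 subr0; apply: WU.
Qed.


Lemma sum_ord_join a b (c : 'I_(a + b) -> K) (u : 'I_a -> V) (v : 'I_b -> V) :
  \sum_(k < a + b) c k *: ord_join u v k =
  \sum_(i < a) c (lshift b i) *: u i + \sum_(j < b) c (rshift a j) *: v j.
Proof.
by rewrite big_split_ord; congr (_ + _); apply: eq_bigr => i _;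
  rewrite ?ord_join_lshift ?ord_join_rshift.
Qed.

Lemma qdim_tower W U T a b : subspace U -> T `<=` U -> U `<=` W ->
  qdim W U a -> qdim U T b -> qdim W T (a + b).
Proof.
move=> sU TU UW [u [Wu freeu spanu]] [v [Uv freev spanv]].
exists (ord_join u v); split.
- move=> k; rewrite -(splitK k); case: (split k) => i /=.
    by rewrite ord_join_lshift.
  by rewrite ord_join_rshift; apply/UW/Uv.
- move=> c; rewrite sum_ord_join => Tc.
  have Ucv : U (\sum_(j < b) c (rshift a j) *: v j) by apply: subspace_sum.
  have cl0 i : c (lshift b i) = 0.
    by move: i; apply: freeu; have := subspaceB sU (TU _ Tc) Ucv; rewrite addrK.
  have cr0 j : c (rshift a j) = 0.
    move: j; apply: freev; move: Tc.
    by rewrite big1 ?add0r // => i _; rewrite cl0 scale0r.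
  by move=> k; rewrite -(splitK k); case: (split k) => i /=.
- move=> x /spanu [e /spanv [f Tef]]; exists (ord_join e f).
  rewrite sum_ord_join opprD addrA.
  under eq_bigr do rewrite ord_join_lshift.
  by under [X in _ - X]eq_bigr do rewrite ord_join_rshift.
Qed.

Lemma qdim_ssum_scap X Y d : subspace X -> subspace Y ->
  qdim (ssum X Y) X d <-> qdim Y (scap X Y) d.
Proof.
move=> sX sY; split=> [[w [XYw freew spanw]] | [w [Yw freew spanw]]].
- have /choice [pq Hpq] : forall i, exists pq : V * V,
      [/\ X pq.1, Y pq.2 & w i = pq.1 + pq.2].
    by move=> i; have [x [y [Xx Yy ->]]] := XYw i; exists (x, y).
  pose p i := (pq i).1; pose q i := (pq i).2.
  have Xp c : X (\sum_(i < d) c i *: p i) by apply: subspace_sum => // i; case: (Hpq i).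
  have sumE c : \sum_(i < d) c i *: w i =
      \sum_(i < d) c i *: p i + \sum_(i < d) c i *: q i.
    by rewrite -big_split; apply: eq_bigr => i _; case: (Hpq i) => _ _ ->; rewrite scalerDr.
  exists q; split.
  + by move=> i; case: (Hpq i).
  + by move=> c [Xc _]; apply: freew; rewrite sumE; apply: subspaceD.
  + move=> v Yv; have [c Xc] := spanw v (ssum_subr sX Yv); exists c; split.
      by move: (subspaceD sX Xc (Xp c)); rewrite sumE opprD addrA addrAC subrK.
    by apply: subspaceB => //; apply: subspace_sum => // i; case: (Hpq i).
- exists w; split.
  + by move=> i; apply: ssum_subr.
  + move=> c Xc; apply: freew; split=> //; exact: subspace_sum.
  + move=> _ [x [y [Xx /spanw [c [Xc _]] ->]]]; exists c.
    by rewrite -addrA; apply: subspaceD.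
Qed.

End Subspaces.

Section DivisionRing.
Variables (K : unitRingType) (V : lmodType K).
Hypothesis hK : division_ring K.
Implicit Types (A B S T U W X Y : V -> Prop) (u v w x y : V).

Lemma subspaceZ_inv U (c : K) x : subspace U -> c != 0 -> U (c *: x) -> U x.
Proof. by move=> sU /hK cU /(subspaceZ sU c^-1); rewrite scalerA mulVr // scale1r. Qed.

Lemma qdim_line U w : subspace U -> ~ U w -> qdim (ssum U (line w)) U 1.
Proof.
move=> sU Uw; exists (fun _ => w); split.
- by move=> _; apply: (ssum_subr sU); apply: line_id.
- move=> c; rewrite big_ord1 => Uc i; rewrite (ord1 i).
  by case: (eqVneq (c ord0) 0) => // /(subspaceZ_inv sU) /(_ Uc).
- by move=> _ [u [_ [Uu [t ->] ->]]]; exists (fun _ => t); rewrite big_ord1 addrK.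
Qed.

Lemma span_mod_exchange U m (g : 'I_m.+1 -> V) w : subspace U ->
  span_mod U g w -> ~ span_mod U (g \o widen_ord (leqnSn m)) w ->
  span_mod U g `<=` span_mod (ssum U (line w)) (g \o widen_ord (leqnSn m)).
Proof.
move=> sU [C UC] wg' v [E UE].
have Cm : C ord_max != 0.
  apply/eqP => Cm0; apply: wg'; exists (C \o widen_ord (leqnSn m)).
  by move: UC; rewrite big_ord_recr /= Cm0 scale0r addr0.
pose t := E ord_max / C ord_max.
exists (fun i => E (widen_ord (leqnSn m) i) - t * C (widen_ord (leqnSn m) i)).
exists ((v - \sum_(i < m.+1) E i *: g i) - t *: (w - \sum_(i < m.+1) C i *: g i)), (t *: w).
split; first by apply: subspaceB => //; apply: subspaceZ.
  by exists t.
rewrite (eq_bigr (fun i => E (widen_ord _ i) *: g (widen_ord _ i) -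
                          t *: (C (widen_ord _ i) *: g (widen_ord _ i)))) /=; last first.
  by move=> i _; rewrite scalerBl scalerA.
rewrite sumrB -scaler_sumr !big_ord_recr /= scalerBr scalerDr scalerA divrK; last exact: hK.
rewrite [in RHS]opprB -[in RHS]addrA subrK [in RHS]opprD [in RHS]addrACA subrK.
by rewrite [in LHS]opprB addrA.
Qed.

Lemma qdim_spanned W U m (g : 'I_m -> V) : subspace W -> subspace U ->
  U `<=` W -> W `<=` span_mod U g -> exists2 k, (k <= m)%N & qdim W U k.
Proof.
elim: m U g => [|m IH] U g sW sU UW Wg.
  by exists 0%N => //; apply/qdim0P => v /Wg [c]; rewrite big_ord0 subr0.
have [Wg'|] := pselect (W `<=` span_mod U (g \o widen_ord (leqnSn m))).
  by have [k km Wk] := IH _ _ sW sU UW Wg'; exists k => //; apply: leqW.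
move=> /existsNP [w /not_implyP [Ww wg']].
have sUw := subspace_ssum sU (subspace_line w).
have UwW : ssum U (line w) `<=` W.
  by apply: ssum_min => // _ [t ->]; apply: subspaceZ.
have [k km WUw] := IH _ _ sW sUw UwW (fun v Wv => span_mod_exchange sU (Wg _ Ww) wg' (Wg _ Wv)).
exists (k + 1)%N; first by rewrite addn1.
apply: qdim_tower sUw (ssum_subl (subspace_line w)) UwW WUw (qdim_line sU _) => Uw.
exact/wg'/span_mod_sub.
Qed.

Lemma free_le_span U a b (v : 'I_a -> V) (w : 'I_b -> V) : subspace U ->
  (forall i, span_mod U w (v i)) ->
  (forall c : 'I_a -> K, U (\sum_(i < a) c i *: v i) -> forall i, c i = 0) -> (a <= b)%N.
Proof.
elim: b U a v w => [|b IH] U a v w sU vw freev.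
  case: a v vw freev => // a v vw freev.
  suff /eqP : (1 : K) = 0 by rewrite oner_eq0.
  apply: (freev (fun _ => 1) _ ord0); apply: (subspace_sum sU) => i.
  by have [c] := vw i; rewrite big_ord0 subr0.
have [vw'|] := pselect (forall i, span_mod U (w \o widen_ord (leqnSn b)) (v i)).
  exact/leqW/(IH _ _ _ _ sU vw' freev).
case: a v vw freev => [|a] v vw freev /existsNP [i0 vw']; first by move: vw'; case: i0.
have sUv := subspace_ssum sU (subspace_line (v i0)).
rewrite ltnS; apply: (IH _ _ (v \o lift i0) (w \o widen_ord (leqnSn b)) sUv).
  by move=> i; exact (span_mod_exchange sU (vw i0) vw' (vw (lift i0 i))).
move=> c [u [_ [Uu [t ->] Ec]]].
pose E k := if unlift i0 k is Some i then c i else - t.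
have UE : U (\sum_(k < a.+1) E k *: v k).
  rewrite (bigD1_ord i0) //= /E unlift_none.
  under eq_bigr do rewrite liftK.
  have Ec' : \sum_(i < a) c i *: v (lift i0 i) = u + t *: v i0 := Ec.
  by rewrite Ec' (addrC u) scaleNr addKr.
by move=> i; have := freev E UE (lift i0 i); rewrite /E liftK.
Qed.

Lemma qdim_unique W U a b : subspace U -> qdim W U a -> qdim W U b -> a = b.
Proof.
have le a' b' : subspace U -> qdim W U a' -> qdim W U b' -> (a' <= b')%N.
  move=> sU [u [Wu freeu _]] [v [_ _ spanv]].
  exact: free_le_span sU (fun i => spanv _ (Wu i)) freeu.
by move=> sU Wa Wb; apply/anti_leq; rewrite !le.
Qed.

Lemma qdim_sub_le A B S T n : subspace S -> subspace T -> B `<=` T -> T `<=` S ->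
  S `<=` ssum A T -> qdim A B n -> exists2 k, (k <= n)%N & qdim S T k.
Proof.
move=> sS sT BT TS SAT [g [_ _ spang]]; apply: (qdim_spanned (g := g)) => // s.
move=> /SAT [a [t [/spang [c Bc] Tt ->]]]; exists c.
by rewrite addrAC; apply: subspaceD => //; apply: BT.
Qed.

Lemma qdim_towerK W U T a b : subspace U -> subspace T -> T `<=` U -> U `<=` W ->
  qdim W U a -> qdim W T (a + b) -> qdim U T b.
Proof.
move=> sU sT TU UW WU WT.
have [e _ UT] := qdim_sub_le sU sT (@subset_refl _ T) TU (fun u Uu => ssum_subl sT (UW _ Uu)) WT.
have /eqP := qdim_unique sT (qdim_tower sU TU UW WU UT) WT.
by rewrite eqn_add2l => /eqP <-.
Qed.

End DivisionRing.

Section Distance.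
Variables (K : unitRingType) (V : lmodType K).
Hypothesis hK : division_ring K.
Implicit Types (U W X Y Z : V -> Prop).

Definition qdist X Y k := qdim (ssum X Y) X k /\ qdim (ssum X Y) Y k.

Lemma qdist_scap X Y k : subspace X -> subspace Y ->
  qdist X Y k <-> qdim X (scap X Y) k /\ qdim Y (scap X Y) k.
Proof.
move=> sX sY; rewrite /qdist [in qdim (ssum X Y) Y _]ssumC.
rewrite (qdim_ssum_scap k sX sY) (qdim_ssum_scap k sY sX) [scap Y X]scapC.
by split=> -[].
Qed.

Lemma qdist0 X Y : subspace X -> subspace Y -> qdist X Y 0 -> X = Y.
Proof.
move=> sX sY [/qdim0P XYX /qdim0P XYY]; apply/seteqP; split=> v Hv.
  exact/XYY/(ssum_subl sY).
exact/XYX/(ssum_subr sX).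
Qed.

Lemma qdist_refl X : subspace X -> qdist X X 0.
Proof.
by move=> sX; split; apply/qdim0P; apply: ssum_min (@subset_refl _ X) (@subset_refl _ X).
Qed.

Lemma qdist_adjacent X W Y k : subspace X -> subspace W -> subspace Y ->
  qdist X W k -> adjacent W Y -> exists2 k', (k' <= k.+1)%N & qdist X Y k'.
Proof.
move=> sX sW sY [XW_X XW_W] [WY_W WY_Y].
pose S := ssum (ssum X W) Y.
have sXW := subspace_ssum sX sW; have sWY := subspace_ssum sW sY.
have sXY := subspace_ssum sX sY; have sS : subspace S := subspace_ssum sXW sY.
have XWS : ssum X W `<=` S := ssum_subl sY.
have WYS : ssum W Y `<=` S.
  by apply: (ssum_min sS _ (ssum_subr sXW)) => w Ww; apply/XWS/(ssum_subr sX).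
have XYS : ssum X Y `<=` S.
  by apply: (ssum_min sS _ (ssum_subr sXW)) => x Xx; apply/XWS/(ssum_subl sW).
have [j1 j1_le1 S_XW] : exists2 j1, (j1 <= 1)%N & qdim S (ssum X W) j1.
  apply: (qdim_sub_le hK _ _ (ssum_subr sX) XWS _ WY_W) => // _ [a [y [XWa Yy ->]]].
  by exists y, a; split=> //; [apply: ssum_subr | rewrite addrC].
have [j2 j2_le S_WY] : exists2 j2, (j2 <= k)%N & qdim S (ssum W Y) j2.
  apply: (qdim_sub_le hK _ _ (ssum_subl sY) WYS _ XW_W) => // _ [a [y [XWa Yy ->]]].
  by exists a, y; split=> //; apply: ssum_subr.
have S_X := qdim_tower sXW (ssum_subl sW) XWS S_XW XW_X.
have S_W := qdim_tower sXW (ssum_subr sX) XWS S_XW XW_W.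
have S_Y := qdim_tower sWY (ssum_subr sW) WYS S_WY WY_Y.
have jE := qdim_unique hK sW (qdim_tower sWY (ssum_subl sY) WYS S_WY WY_W) S_W.
have [a a_le S_XY] := qdim_sub_le hK sS sXY (ssum_subl sY) XYS (ssum_subl sXY) S_X.
exists (j1 + k - a)%N.
  by rewrite (leq_trans (leq_subr _ _)) // -add1n leq_add2r.
rewrite -(subnKC a_le) in S_X; rewrite jE -(subnKC a_le) in S_Y.
by split; apply: (qdim_towerK hK) S_XY _ => //; [apply: ssum_subl | apply: ssum_subr].
Qed.

Lemma walk_qdist X Y n : walk X Y n -> exists2 k, (k <= n)%N & qdist X Y k.
Proof.
move=> [p [<- <- Gp adj]].
have sp i : (i <= n)%N -> subspace (p i) by move=> /Gp [].
suff: forall m, (m <= n)%N -> exists2 k, (k <= m)%N & qdist (p 0%N) (p m) k by apply.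
elim=> [_|m IH mn]; first by exists 0%N => //; apply/qdist_refl/sp.
have [k km Hk] := IH (ltnW mn).
have [k' k'le Hk'] := qdist_adjacent (sp 0%N isT) (sp m (ltnW mn)) (sp m.+1 mn) Hk (adj m mn).
by exists k' => //; apply: leq_trans k'le _.
Qed.

Lemma qdist_hyperplane S Y Z d : subspace Y -> subspace Z -> ssum Z Y `<=` S ->
  qdim S (ssum Z Y) 1 -> qdim S Z d.+1 -> qdim S Y d.+1 -> qdist Z Y d.
Proof.
move=> sY sZ ZYS S_ZY S_Z S_Y; have sZY := subspace_ssum sZ sY.
split; apply: (qdim_towerK hK sZY) S_ZY _ => //; [exact: ssum_subl | exact: ssum_subr].
Qed.

End Distance.

Section Functional.
Variables (K : unitRingType) (V : lmodType K).
Hypothesis hK : division_ring K.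
Implicit Types (U H M : V -> Prop) (u v : V).

Definition linear_form (lam : V -> K) : Prop :=
  (forall x y, lam (x + y) = lam x + lam y) /\ (forall (c : K) x, lam (c *: x) = c * lam x).

Lemma maximal_avoiding U u : subspace U -> ~ U u ->
  exists H, [/\ subspace H, U `<=` H, ~ H u & forall v, exists t : K, H (v - t *: u)].
Proof.
move=> sU Uu.
(* [set0] is admitted so that the union of the empty chain stays in the family. *)
pose P M := M = set0 \/ [/\ subspace M, U `<=` M & ~ M u].
have [H [PH Hmax]] : exists H, P H /\ forall M, H `<` M -> ~ P M.
  apply: Zorn_bigcup => F FP Ftot.
  have [[v [M0 FM0 M0v]]|/nonemptyPn ->] := pselect (\bigcup_(M in F) M !=set0); last by left.
  have good M : F M -> M !=set0 -> [/\ subspace M, U `<=` M & ~ M u].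
    by move=> /FP [-> [? []]|].
  have [sM0 UM0 _] := good M0 FM0 (ex_intro _ v M0v).
  right; split.
  - split; first by exists M0 => //; apply: subspace0.
    + move=> x y [M1 FM1 M1x] [M2 FM2 M2y].
      have [sM1 _ _] := good M1 FM1 (ex_intro _ x M1x).
      have [sM2 _ _] := good M2 FM2 (ex_intro _ y M2y).
      have [M12|M21] := Ftot M1 M2 FM1 FM2.
        by exists M2 => //; apply: subspaceD => //; apply: M12.
      by exists M1 => //; apply: subspaceD => //; apply: M21.
    + move=> c x [M1 FM1 M1x]; exists M1 => //.
      by case: (good M1 FM1 (ex_intro _ x M1x)) => sM1 _ _; apply: subspaceZ.
  - by move=> x Ux; exists M0 => //; apply: UM0.
  - by move=> [M FM Mu]; case: (good M FM (ex_intro _ u Mu)).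
have [sH UH Hu] : [/\ subspace H, U `<=` H & ~ H u].
  case: PH => // H0; exfalso; apply: (Hmax U); last by right; split=> // x.
  by rewrite H0; split=> // /(_ 0 (subspace0 sU)).
exists H; split=> // v; apply: contrapT => noHv.
have Hv : ~ H v by move=> Hv; apply: noHv; exists 0; rewrite scale0r subr0.
apply: (Hmax (ssum H (line v))).
  by split; [exact: ssum_subl (subspace_line v) | move=> /(_ v (ssum_subr sH (line_id v)))].
right; split; first exact: subspace_ssum sH (subspace_line v).
  by move=> x /UH Hx; exact (ssum_subl (subspace_line v) Hx).
move=> [h [_ [Hh [t ->] ueq]]].
have [t0|tnz] := eqVneq t 0; first by apply: Hu; rewrite ueq t0 scale0r addr0.
apply: noHv; exists t^-1; rewrite ueq scalerDr scalerA mulVr ?scale1r; last exact: hK.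
by rewrite opprD addrCA subrr addr0; apply: (subspaceN sH); apply: subspaceZ.
Qed.

Lemma separating_form U u : subspace U -> ~ U u ->
  exists lam : V -> K, [/\ linear_form lam, (forall x, U x -> lam x = 0) & lam u = 1].
Proof.
move=> sU Uu; have [H [sH UH Hu /choice [lam Hlam]]] := maximal_avoiding sU Uu.
have lamE v t : H (v - t *: u) -> lam v = t.
  move=> Ht; case: (eqVneq (lam v) t) => // /negPf ne; exfalso; apply: Hu.
  apply: (subspaceZ_inv hK sH (c := lam v - t)); first by rewrite subr_eq0 ne.
  have := subspaceB sH Ht (Hlam v).
  by rewrite opprB addrC addrA subrK -scalerBl.
exists lam; split; last by apply: lamE; rewrite scale1r subrr; apply: subspace0.
- split=> [x y|c x]; apply: lamE.
    by rewrite scalerDl opprD addrACA; apply: subspaceD.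
  by rewrite -scalerA -scalerBr; apply: subspaceZ.
- by move=> x Ux; apply: lamE; rewrite scale0r subr0; apply: UH.
Qed.

End Functional.

Section Involution.
Variables (K : unitRingType) (V : lmodType K) (s : V -> V).
Hypotheses (s_lin : linear_map s) (sK : involutive s).
Implicit Types (U W X : V -> Prop).

Lemma linear_map0 : s 0 = 0.
Proof. by case: s_lin => sD _; apply: (addrI (s 0)); rewrite -sD !addr0. Qed.

Lemma linear_map_sum n (c : 'I_n -> K) (g : 'I_n -> V) :
  s (\sum_(i < n) c i *: g i) = \sum_(i < n) c i *: s (g i).
Proof.
case: s_lin => sD sZ.
by rewrite (big_morph s sD linear_map0); apply: eq_bigr => i _; rewrite sZ.
Qed.

Lemma linear_mapB x y : s (x - y) = s x - s y.
Proof. by case: s_lin => sD sZ; rewrite sD -scaleN1r sZ scaleN1r. Qed.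

Lemma inG_involution X : inG X -> inG (s @^-1` X).
Proof.
move: s_lin => [sD sZ] [[X0 XD XZ] [f [[fD fZ] fker fim]]].
split; first by split=> [|x y|c x] /=; rewrite ?linear_map0 ?sD ?sZ; auto.
exists (s \o f \o s); split.
- by split=> [x y|c x] /=; rewrite ?sD ?fD ?sZ ?fZ.
- by move=> v /=; rewrite -fker; split=> [/(congr1 s)|->]; rewrite ?sK linear_map0.
- move=> z /=; rewrite fim; split=> -[w fw]; first by exists (s w); rewrite sK fw sK.
  by exists (s w); rewrite -fw sK.
Qed.

Lemma qdim_involution W U n : qdim W U n -> qdim (s @^-1` W) (s @^-1` U) n.
Proof.
move=> [w [Ww freew spanw]]; exists (s \o w); split => /=.
- by move=> i; rewrite sK.
- by move=> c; rewrite linear_map_sum; under eq_bigr do rewrite /= sK; apply: freew.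
- move=> v /spanw [c Uc]; exists c.
  by rewrite linear_mapB linear_map_sum; under eq_bigr do rewrite /= sK.
Qed.

End Involution.

Section SwapMap.
Variables (K : unitRingType) (V : lmodType K) (lam : V -> K) (x0 y0 : V).
Hypotheses (lam_lin : linear_form lam) (lam_x0 : lam x0 = 1) (lam_y0 : lam y0 = -1).

Definition swap_map v := v + lam v *: (y0 - x0).

Lemma swap_map_linear : linear_map swap_map.
Proof.
case: lam_lin => lD lZ; split=> [x y|c x]; rewrite /swap_map.
  by rewrite lD scalerDl addrACA.
by rewrite lZ -scalerA -scalerDr.
Qed.

Lemma lam_swap_map v : lam (swap_map v) = - lam v.
Proof.
case: lam_lin => lD lZ; have lN x : lam (- x) = - lam x by rewrite -scaleN1r lZ mulN1r.
by rewrite lD lZ lD lN lam_x0 lam_y0 mulrDr mulrN1 addrA subrr add0r.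
Qed.

Lemma swap_mapK : involutive swap_map.
Proof.
move=> v; have -> : swap_map (swap_map v) = swap_map v + lam (swap_map v) *: (y0 - x0) by [].
by rewrite lam_swap_map scaleNr addrK.
Qed.

Lemma swap_map_x0 : swap_map x0 = y0.
Proof. by rewrite /swap_map lam_x0 scale1r addrC subrK. Qed.

Lemma swap_map_ker v : lam v = 0 -> swap_map v = v.
Proof. by rewrite /swap_map => ->; rewrite scale0r addr0. Qed.

Lemma swap_map_preimage H : subspace H -> (forall h, H h -> lam h = 0) ->
  swap_map @^-1` ssum H (line x0) = ssum H (line y0).
Proof.
case: swap_map_linear => sD sZ sH H0; apply/seteqP; split=> v.
  move=> [h [_ [Hh [t ->] sv]]]; exists h, (t *: y0); split=> //; first by exists t.
  by rewrite -(swap_mapK v) sv sD sZ swap_map_x0 swap_map_ker ?H0.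
move=> [h [_ [Hh [t ->] ->]]]; exists h, (t *: x0); split=> //; first by exists t.
by rewrite sD sZ -swap_map_x0 swap_mapK swap_map_ker ?H0.
Qed.

Lemma swap_map_stable S : subspace S -> S x0 -> S y0 -> swap_map @^-1` S = S.
Proof.
move=> sS Sx0 Sy0; have Sv v : S v -> S (swap_map v).
  by move=> Sv; apply: (subspaceD sS) => //; apply/(subspaceZ sS)/(subspaceB sS).
by apply/seteqP; split=> v /Sv //=; rewrite swap_mapK.
Qed.

End SwapMap.

Section Exchange.
Variables (K : unitRingType) (V : lmodType K).
Hypothesis hK : division_ring K.
Implicit Types (H S U W X Y Z : V -> Prop) (x y : V).

Lemma qdim_hyperplane W U n : subspace W -> subspace U -> U `<=` W -> qdim W U n.+1 ->
  exists H x, [/\ subspace H, U `<=` H, ~ H x & W = ssum H (line x)].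
Proof.
move=> sW sU UW [x [Wx freex spanx]].
pose H := span_mod U (x \o lift ord_max).
have HW : H `<=` W.
  move=> v [c Uc]; apply: (subspaceBl sW (UW _ Uc)).
  by apply: subspace_sum => // i; apply: Wx.
exists H, (x ord_max); split; first exact: subspace_span_mod.
- exact: span_mod_sub.
- move=> [c Uc]; pose E k := if unlift ord_max k is Some i then - c i else 1.
  suff /eqP : (1 : K) = 0 by rewrite oner_eq0.
  have := freex E _ ord_max; rewrite /E unlift_none; apply.
  rewrite (bigD1_ord ord_max) //= unlift_none scale1r.
  by under eq_bigr do rewrite liftK scaleNr; rewrite sumrN.
- apply/seteqP; split; last first.
    by apply: (ssum_min sW HW) => _ [t ->]; apply/(subspaceZ sW)/Wx.
  move=> v /spanx [c Uc]; exists (v - c ord_max *: x ord_max), (c ord_max *: x ord_max).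
  split; [exists (c \o lift ord_max) | by exists (c ord_max) | by rewrite subrK].
  by move: Uc; rewrite (bigD1_ord ord_max) //= opprD addrA.
Qed.

Lemma adjacent_lines H x y : subspace H -> ~ H x -> ~ ssum H (line x) y ->
  adjacent (ssum H (line x)) (ssum H (line y)).
Proof.
move=> sH Hx Hxy; have sHl z := subspace_ssum sH (subspace_line z).
have Hyx : ~ ssum H (line y) x.
  move=> [h [_ [Hh [t ->] xE]]]; have [t0|tnz] := eqVneq t 0.
    by apply: Hx; rewrite xE t0 scale0r addr0.
  apply: Hxy; exists (- (t^-1 *: h)), (t^-1 *: x); split.
  - by apply/(subspaceN sH)/(subspaceZ sH).
  - by exists t^-1.
  - by rewrite xE scalerDr scalerA mulVr ?scale1r ?addKr //; apply: hK.
have sum_lines a b : ssum (ssum H (line a)) (ssum H (line b)) = ssum (ssum H (line a)) (line b).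
  have sR := subspace_ssum (sHl a) (subspace_line b).
  apply/seteqP; split.
    apply: (ssum_min sR (ssum_subl (subspace_line b))).
    apply: (ssum_min sR _ (ssum_subr (sHl a))).
    exact: subset_trans (ssum_subl (subspace_line a)) (ssum_subl (subspace_line b)).
  apply: (ssum_min (subspace_ssum (sHl a) (sHl b)) (ssum_subl (sHl b))).
  exact: subset_trans (ssum_subr sH) (ssum_subr (sHl a)).
split; first by rewrite sum_lines; apply: qdim_line.
by rewrite ssumC sum_lines; apply: qdim_line.
Qed.

Lemma notin_ssum_line_add X H x y : subspace X -> H `<=` X -> X x -> ~ H x -> ~ X y ->
  ~ ssum H (line (x + y)) x.
Proof.
move=> sX HX Xx Hx Xy [h [_ [Hh [t ->] xE]]].
have [t0|tnz] := eqVneq t 0; first by apply: Hx; rewrite xE t0 scale0r addr0.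
apply: Xy; apply: (subspaceZ_inv hK sX tnz).
have -> : t *: y = x - h - t *: x.
  by rewrite {1}xE (addrC h) addrK scalerDr (addrC (t *: x)) addrK.
by apply: (subspaceB sX); [apply: (subspaceB sX) => //; apply: HX | apply: subspaceZ].
Qed.

Lemma qdim_swapped_hyperplane H X Y x0 y0 : subspace H -> subspace Y -> ~ H x0 ->
  X = ssum H (line x0) -> scap X Y `<=` H -> Y y0 ->
  qdim (ssum X Y) (ssum (ssum H (line y0)) Y) 1.
Proof.
move=> sH sY Hx0 XE IH Yy0; set T := ssum (ssum H (line y0)) Y.
have sT : subspace T := subspace_ssum (subspace_ssum sH (subspace_line y0)) sY.
have -> : ssum X Y = ssum T (line x0).
  rewrite XE; apply/seteqP; split.
    move=> _ [_ [y [[h [_ [Hh [t ->] ->]]] Yy ->]]]; exists (h + y), (t *: x0).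
    split; [exists h, y; split=> //; exact (ssum_subl (subspace_line y0) Hh)
           | by exists t | by rewrite addrAC].
  move=> _ [_ [_ [[_ [y [[h [_ [Hh [s ->] ->]]] Yy ->]]] [t ->] ->]]].
  exists (h + t *: x0), (s *: y0 + y); split.
  - by exists h, (t *: x0); split=> //; exists t.
  - exact: (subspaceD sY (subspaceZ sY s Yy0) Yy).
  - by rewrite addrAC -!addrA; congr (_ + _); rewrite addrCA addrA.
apply: (qdim_line hK sT) => -[_ [y [[h [_ [Hh [t ->] ->]]] Yy x0E]]].
apply: Hx0; apply: (subspaceBl sH (y := h)) => //; apply: IH; split.
  rewrite XE; apply: (subspaceB (subspace_ssum sH (subspace_line x0))).
    exact (ssum_subr sH (line_id x0)).
  exact (ssum_subl (subspace_line x0) Hh).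
by rewrite x0E addrAC (addrC h) addrK; apply: (subspaceD sY (subspaceZ sY t Yy0) Yy).
Qed.

End Exchange.

Section GrassmannGraph.
Variables (K : unitRingType) (V : lmodType K).
Hypothesis hK : division_ring K.
Implicit Types (X Y Z : V -> Prop).

Lemma exists_adjacent_closer X Y d : inG X -> inG Y -> qdist X Y d.+1 ->
  exists Z, [/\ inG Z, adjacent X Z & qdist Z Y d].
Proof.
move=> gX gY XY; have [sX sY] := (gX.1, gY.1); have sI := subspace_scap sX sY.
have [XI YI] : qdim X (scap X Y) d.+1 /\ qdim Y (scap X Y) d.+1 by apply/qdist_scap.
have [H [x0 [sH IH Hx0 XE]]] := qdim_hyperplane sX sI (fun _ h => proj1 h) XI.
have [HY [y0 [sHY IHY HYy0 YE]]] := qdim_hyperplane sY sI (fun _ h => proj2 h) YI.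
have Xx0 : X x0 by rewrite XE; exact (ssum_subr sH (line_id x0)).
have Yy0 : Y y0 by rewrite YE; exact (ssum_subr sHY (line_id y0)).
have HX : H `<=` X by rewrite XE; apply: ssum_subl (subspace_line x0).
have Xy0 : ~ X y0 by move=> Xy0; apply/HYy0/IHY.
have [lam [lam_lin lamH lam_x0]] := separating_form hK
  (subspace_ssum sH (subspace_line (x0 + y0))) (notin_ssum_line_add hK sX HX Xx0 Hx0 Xy0).
have lam_y0 : lam y0 = -1.
  have /eqP := lamH _ (ssum_subr sH (line_id (x0 + y0))).
  by rewrite lam_lin.1 lam_x0 addrC addr_eq0 => /eqP.
have s_lin := swap_map_linear x0 y0 lam_lin; have sK := swap_mapK lam_lin lam_x0 lam_y0.
set Z := swap_map lam x0 y0 @^-1` X.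
have ZE : Z = ssum H (line y0).
  by rewrite /Z XE swap_map_preimage // => h /(ssum_subl (subspace_line _)) /lamH.
exists Z; split; first exact: inG_involution.
  by rewrite ZE {1}XE; apply: adjacent_lines => //; rewrite -XE.
have sS := subspace_ssum sX sY.
apply: (qdist_hyperplane hK (S := ssum X Y)) XY.2 => //.
- by rewrite ZE; apply/subspace_ssum/subspace_line.
- rewrite ZE; apply: (ssum_min sS) (ssum_subr sX); apply: (ssum_min sS).
    exact: subset_trans HX (ssum_subl sY).
  by move=> _ [t ->]; apply/(subspaceZ sS)/(ssum_subr sX).
- by rewrite ZE; apply: (qdim_swapped_hyperplane hK sH sY Hx0 XE IH Yy0).
- have Sx0 := ssum_subl sY Xx0; have Sy0 := ssum_subr sX Yy0.
  rewrite -[ssum X Y](swap_map_stable lam_lin lam_x0 lam_y0 sS Sx0 Sy0).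
  exact: qdim_involution XY.1.
Qed.

Lemma qdist_walk X Y d : inG X -> inG Y -> qdist X Y d -> walk X Y d.
Proof.
elim: d X Y => [|d IH] X Y gX gY XY.
  rewrite -(qdist0 gX.1 gY.1 XY); exists (fun _ => X); split=> // i _; exact: gX.
have [Z [gZ XZ ZY]] := exists_adjacent_closer gX gY XY.
have [p [p0 pd Gp adj]] := IH Z Y gZ gY ZY.
exists (fun i => if i is i'.+1 then p i' else X); split=> //.
- by case=> [|i] Hi //; apply: Gp.
- by case=> [|i] Hi; [rewrite p0 | apply: adj].
Qed.

Lemma gdist_qdist X Y d : inG X -> inG Y -> gdist X Y d <-> qdist X Y d.
Proof.
move=> gX gY; split=> [[XYd minXY] | XY].
  have [k kd XYk] := walk_qdist hK XYd.
  suff kE : k = d by rewrite -kE.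
  by apply/eqP; rewrite eqn_leq kd leqNgt; apply/negP => /minXY; apply; apply: qdist_walk.
split=> [|n nd /(walk_qdist hK) [k kn XYk]]; first exact: qdist_walk.
have kE := qdim_unique hK gX.1 XYk.1 XY.1.
by move: (leq_ltn_trans kn nd); rewrite kE ltnn.
Qed.

End GrassmannGraph.

Theorem mainTheorem7 (K : unitRingType) (V : lmodType K) :
  division_ring K ->
  (exists X : V -> Prop, inG X) ->
  forall (d : nat) (X Y : V -> Prop), inG X -> inG Y ->
    (gdist X Y d <-> (qdim (ssum X Y) X d /\ qdim (ssum X Y) Y d)) /\
    ((qdim (ssum X Y) X d /\ qdim (ssum X Y) Y d) <->
     (qdim X (scap X Y) d /\ qdim Y (scap X Y) d)).
Proof.
move=> hK _ d X Y gX gY.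
by split; [apply: gdist_qdist | apply: qdist_scap gX.1 gY.1].
Qed.
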